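(* Let $\mathbb X,\mathbb Y$ be Euclidean spaces, $\Phi\colon\mathbb X\rightrightarrows\mathbb Y$ with closed graph, $(\bar x,\bar y)\in\operatorname{gph}\Phi$, $u\in\mathbb S_{\mathbb X}$. If $\Phi$ is quasi-normal in direction $u$ at $(\bar x,\bar y)$ with respect to some orthonormal basis $\mathcal E=\{e_1,\dots,e_m\}$ of $\mathbb Y$, then $\Phi$ is strongly asymptotically regular at $(\bar x,\bar y)$ in direction $u$ and metrically subregular at $(\bar x,\bar y)$ in direction $u$.
   Context: $\widehat D^*\Phi(x,y)(y^* )=\{x^*\mid(x^*,-y^* )\in\widehat{\mathcal N}_{\operatorname{gph}\Phi}(x,y)\}$ (regular coderivative); $D^*\Phi((\bar x,\bar y);(u,v))(y^* )=\{x^*\mid(x^*,-y^* )\in\mathcal N_{\operatorname{gph}\Phi}((\bar x,\bar y);(u,v))\}$ with the directional limiting normal cone ($\eta\in\mathcal N_Q(z;w)$ iff there are $w_k\to w$, $t_k\downarrow0$, $\eta_k\to\eta$, $\eta_k\in\widehat{\mathcal N}_Q(z+t_kw_k)$); $\ker\Psi=\{y^*\mid0\in\Psi(y^* )\}$, $\operatorname{Im}\Psi=\bigcup\Psi(y^* )$. Quasi-normality in direction $u$ w.r.t. $\mathcal E$: there is no nonzero $\lambda\in\ker D^*\Phi((\bar x,\bar y);(u,0))$ for which there exist $(x_k,y_k)\in\operatorname{gph}\Phi$ with $x_k\ne\bar x$, $\lambda_k\in\mathbb Y$, $\eta_k\in\mathbb X$ such that $x_k\to\bar x$, $y_k\to\bar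 y$, $\lambda_k\to\lambda$, $\eta_k\to0$, $\frac{x_k-\bar x}{\|x_k-\bar x\|}\to u$, $\frac{y_k-\bar y}{\|x_k-\bar x\|}\to0$, and for all $k$ and $i$: $\eta_k\in\widehat D^*\Phi(x_k,y_k)(\lambda_k)$ and $\langle\lambda,e_i\rangle\langle y_k-\bar y,e_i\rangle>0$ whenever $\langle\lambda,e_i\rangle\ne0$. Strong asymptotic regularity in direction $u$: for all $(x_k,y_k)\in\operatorname{gph}\Phi$, $x_k^*$, $\lambda_k$, $x^*$, $y^*$ with $x_k\notin\Phi^{-1}(\bar y)$, $y_k\neq\bar y$, $x_k^*\in\widehat D^*\Phi(x_k,y_k)(\lambda_k)$ and $x_k\to\bar x$, $y_k\to\bar y$, $x_k^*\to x^*$, $\frac{x_k-\bar x}{\|x_k-\bar x\|}\to u$, $\frac{y_k-\bar y}{\|x_k-\bar x\|}\to0$, $\frac{\|y_k-\bar y\|}{\|x_k-\bar x\|}\lambda_k\to y^*$, $\|\lambda_k\|\to\infty$, $\frac{y_k-\bar y}{\|y_k-\bar y\|}-\frac{\lambda_k}{\|\lambda_k\|}\to0$, one has $x^*\in\operatorname{Im}D^*\Phi((\bar x,\bar y);(u,0))$. Metric subregularity in direction $u$: there are $\varepsilon,\delta,\kappa>0$ with $\operatorname{dist}(x,\Phi^{-1}(\bar y))\le\kappa\operatorname{dist}(\bar y,\Phi(x))$ for all $x\in\bar x+\mathbb B_{\varepsilon,\delta}(u)$, $\mathbb B_{\varepsilon,\delta}(u)=\{w\mid\|\|w\|u-\|u\|w\|\le\delta\|u\|\|w\|,\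 \|w\|\le\varepsilon\}$. *)

From HB Require Import structures.
From mathcomp Require Import all_boot all_order all_algebra.
From mathcomp Require Import all_classical all_reals all_analysis.
Set Implicit Arguments. Unset Strict Implicit. Unset Printing Implicit Defensive.
Import Order.TTheory GRing.Theory Num.Theory.
Import numFieldNormedType.Exports.
Local Open Scope classical_set_scope.
Local Open Scope ring_scope.

Section Defs.
Variable R : realType.

Definition dot {k : nat} (u v : 'rV[R]_k) : R := \sum_(i < k) u 0 i * v 0 i.
Definition enorm {k : nat} (u : 'rV[R]_k) : R := Num.sqrt (dot u u).

(* orthonormal family of k vectors in R^k (hence an orthonormal basis) *)
Definition orthonormal_basis {k : nat} (e : 'I_k -> 'rV[R]_k) : Prop :=
  forall i j, dot (e i) (e j) = (if i == j then 1 else 0).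

Context {n m : nat}.
Implicit Types (Phi : 'rV[R]_n -> set 'rV[R]_m).

Definition gph Phi : set ('rV[R]_n * 'rV[R]_m) := [set p | Phi p.1 p.2].

Definition reg_normal Phi (x : 'rV[R]_n) (y : 'rV[R]_m)
    (xs : 'rV[R]_n) (ys : 'rV[R]_m) : Prop :=
  Phi x y /\
  forall eps : R, 0 < eps -> exists delta : R, 0 < delta /\
    forall x' y', Phi x' y' ->
      Num.sqrt (dot (x' - x) (x' - x) + dot (y' - y) (y' - y)) < delta ->
      dot xs (x' - x) + dot ys (y' - y) <=
        eps * Num.sqrt (dot (x' - x) (x' - x) + dot (y' - y) (y' - y)).

Definition reg_coderiv Phi x y (ys : 'rV[R]_m) (xs : 'rV[R]_n) : Prop :=
  reg_normal Phi x y xs (- ys).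

Definition dir_normal Phi (xb : 'rV[R]_n) (yb : 'rV[R]_m) (u : 'rV[R]_n) (v : 'rV[R]_m)
    (xs : 'rV[R]_n) (ys : 'rV[R]_m) : Prop :=
  exists (wx : nat -> 'rV[R]_n) (wy : nat -> 'rV[R]_m) (t : nat -> R)
         (xsk : nat -> 'rV[R]_n) (ysk : nat -> 'rV[R]_m),
    wx @ \oo --> u /\ wy @ \oo --> v /\
    (forall k, 0 < t k) /\ t @ \oo --> (0 : R) /\
    xsk @ \oo --> xs /\ ysk @ \oo --> ys /\
    forall k, reg_normal Phi (xb + t k *: wx k) (yb + t k *: wy k) (xsk k) (ysk k).

Definition dir_coderiv Phi xb yb u v (ys : 'rV[R]_m) (xs : 'rV[R]_n) : Prop :=
  dir_normal Phi xb yb u v xs (- ys).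

Definition quasi_normal_dir Phi (xb : 'rV[R]_n) (yb : 'rV[R]_m) (u : 'rV[R]_n)
    (e : 'I_m -> 'rV[R]_m) : Prop :=
  ~ exists lam : 'rV[R]_m,
      lam != 0 /\ dir_coderiv Phi xb yb u 0 lam 0 /\
      exists (xk : nat -> 'rV[R]_n) (yk : nat -> 'rV[R]_m)
             (lamk : nat -> 'rV[R]_m) (etak : nat -> 'rV[R]_n),
        (forall k, Phi (xk k) (yk k)) /\ (forall k, xk k != xb) /\
        xk @ \oo --> xb /\ yk @ \oo --> yb /\
        lamk @ \oo --> lam /\ etak @ \oo --> (0 : 'rV[R]_n) /\
        (fun k => (enorm (xk k - xb))^-1 *: (xk k - xb)) @ \oo --> u /\
        (fun k => (enorm (xk k - xb))^-1 *: (yk k - yb)) @ \oo --> (0 : 'rV[R]_m) /\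
        forall k, reg_coderiv Phi (xk k) (yk k) (lamk k) (etak k) /\
          forall i, dot lam (e i) != 0 -> 0 < dot lam (e i) * dot (yk k - yb) (e i).

Definition strongly_asymp_regular_dir Phi (xb : 'rV[R]_n) (yb : 'rV[R]_m)
    (u : 'rV[R]_n) : Prop :=
  forall (xk : nat -> 'rV[R]_n) (yk : nat -> 'rV[R]_m) (xsk : nat -> 'rV[R]_n)
         (lamk : nat -> 'rV[R]_m) (xs : 'rV[R]_n) (ys : 'rV[R]_m),
    (forall k, Phi (xk k) (yk k)) ->
    (forall k, ~ Phi (xk k) yb) ->
    (forall k, yk k != yb) ->
    (forall k, reg_coderiv Phi (xk k) (yk k) (lamk k) (xsk k)) ->
    xk @ \oo --> xb -> yk @ \oo --> yb -> xsk @ \oo --> xs ->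
    (fun k => (enorm (xk k - xb))^-1 *: (xk k - xb)) @ \oo --> u ->
    (fun k => (enorm (xk k - xb))^-1 *: (yk k - yb)) @ \oo --> (0 : 'rV[R]_m) ->
    (fun k => (enorm (yk k - yb) / enorm (xk k - xb)) *: lamk k) @ \oo --> ys ->
    (forall M : R, exists N : nat, forall k, (N <= k)%N -> M < enorm (lamk k)) ->
    (fun k => (enorm (yk k - yb))^-1 *: (yk k - yb) - (enorm (lamk k))^-1 *: lamk k)
      @ \oo --> (0 : 'rV[R]_m) ->
    exists ys' : 'rV[R]_m, dir_coderiv Phi xb yb u 0 ys' xs.

End Defs.

(* distance from a point to a set, in the extended reals (+oo for the empty set) *)
Definition edist {R : realType} {k : nat} (x : 'rV[R]_k) (A : set 'rV[R]_k) : \bar R :=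
  ereal_inf [set (enorm (x - a))%:E | a in A].

Definition dir_ball {R : realType} {n : nat} (eps delta : R) (u w : 'rV[R]_n) : Prop :=
  enorm (enorm w *: u - enorm u *: w) <= delta * enorm u * enorm w /\ enorm w <= eps.

Definition metric_subregular_dir {R : realType} {n m : nat}
    (Phi : 'rV[R]_n -> set 'rV[R]_m) (xb : 'rV[R]_n) (yb : 'rV[R]_m) (u : 'rV[R]_n) : Prop :=
  exists eps delta kappa : R, 0 < eps /\ 0 < delta /\ 0 < kappa /\
    forall x, dir_ball eps delta u (x - xb) ->
      (edist x [set x' | Phi x' yb] <= kappa%:E * edist yb (Phi x))%E.

From Pilot Require Import Defs.
From HB Require Import structures.
From mathcomp Require Import all_boot all_order all_algebra.
From mathcomp Require Import all_classical all_reals all_analysis.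
From mathcomp Require Import ring lra.
Import Order.TTheory GRing.Theory Num.Theory.
Import numFieldNormedType.Exports.
Local Open Scope classical_set_scope.
Local Open Scope ring_scope.
Set Implicit Arguments. Unset Strict Implicit. Unset Printing Implicit Defensive.

(* Both properties are proved by contradiction with quasi-normality.  If either
   fails, one finds graph points (x_k, y_k) with x_k -> xb in direction u,
   y_k <> yb, |y_k - yb| = o(|x_k - xb|), and regular normals (eta_k, -l_k) with
   eta_k -> 0, |l_k| = 1 and l_k - (y_k - yb)/|y_k - yb| -> 0.  Along a
   subsequence l_k tends to a unit vector mu; the signs of the coordinates of
   y_k - yb then eventually agree with those of mu, so mu is a multiplier that
   quasi-normality forbids.
   For strong asymptotic regularity these are the points of the definition,
   with normals (x*_k, -lambda_k) rescaled by 1/|lambda_k| -> 0, which sends the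
   x-component to 0.
   For metric subregularity they come from penalization: if x violates the
   estimate with constant d^-2 and r = dist(x, Phi^-1 yb), a minimizer of
   |y' - yb| + |x' - x|^2 / r over the graph stays within d r of x, hence has
   y' <> yb, and its optimality condition is a proximal, hence regular, normal
   with multiplier (y' - yb)/|y' - yb|. *)

Section Euclidean.
Variables (R : realType) (k : nat).
Implicit Types (u v w : 'rV[R]_k) (c : R).

Lemma dotC u v : dot u v = dot v u.
Proof. by apply: eq_bigr => i _; rewrite mulrC. Qed.

Lemma dotDl u v w : dot (u + v) w = dot u w + dot v w.
Proof. by rewrite /dot -big_split; apply: eq_bigr => i _; rewrite !mxE mulrDl. Qed.

Lemma dotZl c u v : dot (c *: u) v = c * dot u v.
Proof. by rewrite /dot mulr_sumr; apply: eq_bigr => i _; rewrite !mxE mulrA. Qed.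

Lemma dotNl u v : dot (- u) v = - dot u v.
Proof. by rewrite -scaleN1r dotZl mulN1r. Qed.

Lemma dotBl u v w : dot (u - v) w = dot u w - dot v w.
Proof. by rewrite dotDl dotNl. Qed.

Lemma dotDr u v w : dot u (v + w) = dot u v + dot u w.
Proof. by rewrite dotC dotDl !(dotC u). Qed.

Lemma dotZr c u v : dot u (c *: v) = c * dot u v.
Proof. by rewrite dotC dotZl dotC. Qed.

Lemma dotNr u v : dot u (- v) = - dot u v.
Proof. by rewrite dotC dotNl dotC. Qed.

Lemma dotBr u v w : dot u (v - w) = dot u v - dot u w.
Proof. by rewrite dotDr dotNr. Qed.

Lemma dot0l v : dot 0 v = 0.
Proof. by rewrite -(scale0r 0) dotZl mul0r. Qed.

Lemma dotDD u v : dot (u + v) (u + v) = dot u u + 2 * dot u v + dot v v.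
Proof. by rewrite dotDl !dotDr (dotC v u); ring. Qed.

Lemma coord_sqr_le_dot u i : u 0 i ^+ 2 <= dot u u.
Proof.
rewrite /dot (bigD1 i) //= expr2 lerDl.
by apply: sumr_ge0 => j _; rewrite -expr2 sqr_ge0.
Qed.

Lemma dot_ge0 u : 0 <= dot u u.
Proof. by apply: sumr_ge0 => i _; rewrite -expr2 sqr_ge0. Qed.

Lemma dot_eq0 u : (dot u u == 0) = (u == 0).
Proof.
apply/eqP/eqP => [u0|->]; last exact: dot0l.
apply/rowP => i; rewrite mxE; apply/eqP; rewrite -sqrf_eq0 eq_le sqr_ge0 andbT.
by rewrite -u0 coord_sqr_le_dot.
Qed.

Lemma enorm_ge0 u : 0 <= enorm u.
Proof. exact: sqrtr_ge0. Qed.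

Lemma enorm_sqr u : enorm u ^+ 2 = dot u u.
Proof. by rewrite sqr_sqrtr // dot_ge0. Qed.

Lemma enorm0 : enorm (0 : 'rV[R]_k) = 0.
Proof. by rewrite /enorm dot0l sqrtr0. Qed.

Lemma enorm_eq0 u : (enorm u == 0) = (u == 0).
Proof. by rewrite sqrtr_eq0 le_eqVlt ltNge dot_ge0 orbF dot_eq0. Qed.

Lemma enorm_gt0 u : (0 < enorm u) = (u != 0).
Proof. by rewrite lt_neqAle enorm_ge0 andbT eq_sym enorm_eq0. Qed.

Lemma enormZ c u : enorm (c *: u) = `|c| * enorm u.
Proof. by rewrite /enorm dotZl dotZr mulrA -expr2 sqrtrM ?sqr_ge0 // sqrtr_sqr. Qed.

Lemma enormN u : enorm (- u) = enorm u.
Proof. by rewrite -scaleN1r enormZ normrN normr1 mul1r. Qed.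

Lemma enorm_distC u v : enorm (u - v) = enorm (v - u).
Proof. by rewrite -enormN opprB. Qed.

Lemma enorm_normalize u : u != 0 -> enorm ((enorm u)^-1 *: u) = 1.
Proof.
move=> u0; rewrite enormZ ger0_norm ?invr_ge0 ?enorm_ge0 // mulVf //.
by rewrite enorm_eq0.
Qed.

Lemma dot_le_enorm u v : dot u v <= enorm u * enorm v.
Proof.
have [->|v0] := eqVneq v 0; first by rewrite dotC dot0l mulr_ge0 ?enorm_ge0.
have vv0 : 0 < dot v v by rewrite lt_neqAle eq_sym dot_eq0 v0 dot_ge0.
have := dot_ge0 (dot v v *: u - dot u v *: v).
rewrite !(dotBl, dotBr, dotZl, dotZr) (dotC v u) => h.
apply: le_trans (ler_norm _) _.
rewrite -ler_sqr ?nnegrE ?normr_ge0 ?mulr_ge0 ?enorm_ge0 // real_normK ?num_real //.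
by rewrite exprMn !enorm_sqr -(ler_pM2l vv0); nra.
Qed.

Lemma ler_abs_dot u v : `|dot u v| <= enorm u * enorm v.
Proof.
rewrite ler_norml dot_le_enorm andbT lerNl -dotNr.
by apply: le_trans (dot_le_enorm _ _) _; rewrite enormN.
Qed.

Lemma ler_enormD u v : enorm (u + v) <= enorm u + enorm v.
Proof.
rewrite -ler_sqr ?nnegrE ?addr_ge0 ?enorm_ge0 // enorm_sqr dotDD sqrrD !enorm_sqr.
by rewrite lerD2r lerD2l mulr_natl lerMn2r dot_le_enorm orbT.
Qed.

Lemma ler_dist_enorm u v : `|enorm u - enorm v| <= enorm (u - v).
Proof.
have := ler_enormD (u - v) v; have := ler_enormD (v - u) u.
rewrite !subrK enorm_distC ler_norml; lra.
Qed.

Lemma coord_le_enorm u i : `|u 0 i| <= enorm u.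
Proof.
by rewrite -ler_sqr ?nnegrE ?enorm_ge0 // real_normK ?num_real // enorm_sqr
  coord_sqr_le_dot.
Qed.

Lemma mx_norm_le_enorm u : `|u| <= enorm u.
Proof.
change (mx_norm u <= enorm u); rewrite mx_normrE; apply: bigmax_le => [|[i j] _];
  first exact: enorm_ge0.
by rewrite [i]ord1; exact: coord_le_enorm.
Qed.

Lemma enorm_le_mx_norm u : enorm u <= k%:R * `|u|.
Proof.
have coord_le i : `|u 0 i| <= `|u|.
  change (`|u 0 i| <= mx_norm u); rewrite mx_normrE.
  by apply/bigmax_geP; right; exists (0, i).
rewrite -ler_sqr ?nnegrE ?mulr_ge0 ?enorm_ge0 // enorm_sqr exprMn.
apply: le_trans (_ : k%:R * `|u| ^+ 2 <= _).
  rewrite /dot -[k in k%:R]card_ord -sum1_card natr_sum mulr_suml.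
  apply: ler_sum => i _; rewrite mul1r -expr2 -real_normK ?num_real //.
  by rewrite lerXn2r ?nnegrE ?normr_ge0 // coord_le.
rewrite ler_wpM2r ?sqr_ge0 // -natrX ler_nat; case: (k) => // k'.
by rewrite expnS leq_pmulr.
Qed.

Lemma enorm_normalizeB_le u v : u != 0 -> v != 0 ->
  enorm v * enorm ((enorm u)^-1 *: u - (enorm v)^-1 *: v) <= 2 * enorm (u - v).
Proof.
rewrite -!enorm_gt0; set a := enorm u; set b := enorm v => a0 b0.
have -> : b * enorm (a^-1 *: u - b^-1 *: v) = enorm ((b / a - 1) *: u + (u - v)).
  rewrite -{1}(ger0_norm (ltW b0)) -enormZ scalerBr !scalerA mulfV ?gt_eqF //.
  by rewrite scale1r scalerBl scale1r addrA subrK.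
apply: le_trans (ler_enormD _ _) _; rewrite enormZ.
have -> : `|b / a - 1| * a = `|b - a|.
  by rewrite -{2}(ger0_norm (ltW a0)) -normrM mulrBl mulfVK ?gt_eqF // mul1r.
by rewrite mulr2n mulrDl mul1r lerD2r enorm_distC ler_dist_enorm.
Qed.

Lemma enorm_le_tangent u v : u != 0 ->
  enorm v <= enorm u + (enorm u)^-1 * dot u (v - u) + (2 * enorm u)^-1 * enorm (v - u) ^+ 2.
Proof.
rewrite -enorm_gt0; set a := enorm u => a0.
have vE : enorm v ^+ 2 = a ^+ 2 + 2 * dot u (v - u) + enorm (v - u) ^+ 2.
  by rewrite /a !enorm_sqr -{1 2}(subrK u v) (addrC (v - u)); exact: dotDD.
rewrite -(ler_pM2l (_ : 0 < 2 * a)) ?mulr_gt0 //.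
have -> : 2 * a * (a + a^-1 * dot u (v - u) + (2 * a)^-1 * enorm (v - u) ^+ 2) =
    a ^+ 2 + enorm v ^+ 2.
  by rewrite vE; field; rewrite gt_eqF.
by have := sqr_ge0 (enorm v - a); rewrite sqrrB; lra.
Qed.

Lemma normalize_dir_le u v w (d : R) : u != 0 -> v != 0 ->
  enorm (enorm u *: w - u) <= d * enorm u -> enorm (v - u) <= d * enorm u ->
  enorm ((enorm v)^-1 *: v - w) <= 3 * d.
Proof.
move=> u0 v0; have a0 : 0 < enorm u by rewrite enorm_gt0.
set a := enorm u in a0 * => hw hvu.
have uw : enorm (a^-1 *: u - w) <= d.
  rewrite -(ler_pM2l a0) -{1}(ger0_norm (ltW a0)) -enormZ scalerBr scalerA.
  by rewrite mulfV ?gt_eqF // scale1r enorm_distC [a * d]mulrC.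
have vu : enorm ((enorm v)^-1 *: v - a^-1 *: u) <= 2 * d.
  have := enorm_normalizeB_le v0 u0; rewrite -/a => h.
  by rewrite -(ler_pM2l a0); lra.
have := ler_enormD ((enorm v)^-1 *: v - a^-1 *: u) (a^-1 *: u - w).
rewrite addrA subrK; lra.
Qed.
End Euclidean.

Lemma cluster_seq_near {T : topologicalType} (a : nat -> T) (mu : T)
    (P : nat -> Prop) (B : set T) :
  cluster (a @ \oo) mu -> (\forall j \near \oo, P j) -> nbhs mu B ->
  exists j, P j /\ B (a j).
Proof.
move=> cl hP hB.
have aP : (a @ \oo) (a @` P) by apply: filterS hP => j Pj; exists j.
by have [_ [[j Pj <-] Bj]] := cl _ _ aP hB; exists j.
Qed.

Lemma cluster_subseq {R : realType} {T : pseudoMetricType R} (a : nat -> T) (mu : T) :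
  cluster (a @ \oo) mu ->
  exists2 phi : nat -> nat, phi @ \oo --> \oo & a \o phi @ \oo --> mu.
Proof.
move=> cl.
have /choice [phi hphi] : forall j, exists i, (j <= i)%N /\ ball mu j.+1%:R^-1 (a i).
  move=> j; have j0 : (0 : R) < j.+1%:R^-1 by rewrite invr_gt0 ltr0Sn.
  exact: cluster_seq_near cl (nbhs_infty_ge j) (nbhsx_ballx mu _ j0).
exists phi.
  move=> P [N _ hN]; exists N => // j /= Nj; apply: hN.
  exact: leq_trans Nj (hphi j).1.
apply/cvg_ballP => eps eps0; near=> j; apply: le_ball (hphi j).2.
by apply: ltW; near: j; exact: (near_infty_natSinv_lt (PosNum eps0)).
Unshelve. all: by end_near. Qed.

Section EuclideanTopology.
Variables (R : realType) (k : nat).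
Implicit Types (l c : 'rV[R]_k).

Lemma nbhs_enorm_lt l (eps : R) : 0 < eps -> nbhs l [set v | enorm (v - l) < eps].
Proof.
move=> eps0; have d0 : 0 < eps / (k%:R + 1) by rewrite divr_gt0 // ltr_wpDl.
apply: filterS (nbhsx_ballx l _ d0) => v; rewrite -ball_normE /= => lv.
rewrite enorm_distC; apply: le_lt_trans (enorm_le_mx_norm _) _.
apply: le_lt_trans (ler_wpM2l (ler0n _ k) (ltW lv)) _.
by rewrite mulrCA gtr_pMr // ltr_pdivrMr ?ltr_wpDl // mul1r ltrDl.
Qed.

Lemma nbhs_enormP l (W : set 'rV[R]_k) : nbhs l W ->
  exists2 eps : R, 0 < eps & forall v, enorm (v - l) < eps -> W v.
Proof.
move=> /nbhs_ballP [eps eps0 hW]; exists eps => // v hv; apply: hW.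
by rewrite -ball_normE /= distrC; apply: le_lt_trans (mx_norm_le_enorm _) hv.
Qed.

Lemma cvg_enormP {T} {F : set_system T} {FF : Filter F} (f : T -> 'rV[R]_k) l :
  f @ F --> l <-> forall eps : R, 0 < eps -> \forall t \near F, enorm (f t - l) < eps.
Proof.
split=> [fl eps eps0|fl W /nbhs_enormP [eps eps0 hW]].
  exact: fl _ (nbhs_enorm_lt l eps0).
by apply: filterS (fl _ eps0) => t /hW.
Qed.

Lemma continuous_enorm_sub c : continuous (fun v : 'rV[R]_k => enorm (v - c)).
Proof.
move=> l; apply/(@cvgrPdist_lt _ R^o _ (nbhs l) (nbhs_filter l)) => eps eps0.
apply: filterS (nbhs_enorm_lt l eps0) => v; apply: le_lt_trans.
have -> : v - l = (v - c) - (l - c) by rewrite opprB addrA subrK.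
by rewrite distrC ler_dist_enorm.
Qed.

Lemma compact_enorm_le c (M : R) : compact [set v | enorm (v - c) <= M].
Proof.
have closedA : closed [set v | enorm (v - c) <= M].
  exact: (continuous_closedP _).1 (@continuous_enorm_sub c) _ (@closed_le _ M).
have boundedA : bounded_set [set v | enorm (v - c) <= M].
  exists (`|c| + M); split; first exact: num_real.
  move=> N hN v /= hv.
  apply: le_trans (ltW hN); rewrite -[v](subrK c) addrC.
  by apply: le_trans (ler_normD _ _) _; rewrite lerD2l (le_trans (mx_norm_le_enorm _)).
exact: bounded_closed_compact boundedA closedA.
Qed.

Lemma exists_unit_cluster (a : nat -> 'rV[R]_k) :
  (\forall j \near \oo, enorm (a j) = 1) -> exists2 mu, mu != 0 & cluster (a @ \oo) mu.
Proof.
move=> a1.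
have [mu [_ cl]] : [set v | enorm (v - 0) <= 1] `&` cluster (a @ \oo) !=set0.
  by apply: compact_enorm_le; apply: filterS a1 => j aj; rewrite /= subr0 aj.
exists mu => //; apply/eqP => mu0.
have [j [aj1]] := cluster_seq_near cl a1 (nbhs_enorm_lt mu (ltr01 : (0 : R) < 1)).
by rewrite /= mu0 subr0 aj1 ltxx.
Qed.

Lemma cvg_dotl {T} {F : set_system T} {FF : Filter F} (f : T -> 'rV[R]_k) l w :
  f @ F --> l -> (fun t => dot (f t) w) @ F --> dot l w.
Proof.
move=> /cvg_enormP fl; apply/cvgrPdist_lt => eps eps0.
have d0 : 0 < eps / (enorm w + 1) by rewrite divr_gt0 // ltr_wpDl ?enorm_ge0.
apply: filterS (fl _ d0) => t hft.
rewrite -dotBl (le_lt_trans (ler_abs_dot _ _)) // enorm_distC.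
apply: le_lt_trans (ler_wpM2r (enorm_ge0 w) (ltW hft)) _.
by rewrite mulrAC ltr_pdivrMr ?ltr_wpDl ?enorm_ge0 // ltr_pM2l // ltrDl.
Qed.

Lemma cvg_enorm_le {T} {F : set_system T} {FF : Filter F} (f : T -> 'rV[R]_k) l
    (b : T -> R) :
  b @ F --> 0 -> (forall t, enorm (f t - l) <= b t) -> f @ F --> l.
Proof.
move=> b0 fb; apply/cvg_enormP => eps eps0.
by apply: filterS (cvgr_lt _ b0 _ eps0) => t; apply: le_lt_trans (fb t).
Qed.

Lemma near_dot_sign {T} {F : set_system T} {FF : Filter F} (I : finType)
    (e : I -> 'rV[R]_k) (f : T -> 'rV[R]_k) l :
  f @ F --> l ->
  \forall t \near F, forall i, dot l (e i) != 0 -> 0 < dot l (e i) * dot (f t) (e i).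
Proof.
move=> fl; apply: filter_forall => i.
have [->|li0] := eqVneq (dot l (e i)) 0; first exact: nearW.
have : (fun t => dot l (e i) * dot (f t) (e i)) @ F --> dot l (e i) * dot l (e i).
  exact: (@cvgM _ _ F FF _ _ _ _ (cvg_cst _) (cvg_dotl fl)).
move=> /(cvgr_gt _) /(_ 0); rewrite -expr2 exprn_even_gt0 // li0 => /(_ isT).
by apply: filterS => t ? _.
Qed.
End EuclideanTopology.

Section Normals.
Variables (R : realType) (n m : nat) (Phi : 'rV[R]_n -> set 'rV[R]_m).
Implicit Types (x : 'rV[R]_n) (y : 'rV[R]_m).

Lemma reg_normalZ x y xs ys (c : R) :
  0 <= c -> reg_normal Phi x y xs ys -> reg_normal Phi x y (c *: xs) (c *: ys).
Proof.
move=> c0 [hP h]; split => // eps eps0.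
have [->|cn0] := eqVneq c 0.
  exists 1; split=> // x' y' _ _; rewrite !dotZl !mul0r addr0.
  by rewrite mulr_ge0 ?sqrtr_ge0 // ltW.
have {c0 cn0}c0 : 0 < c by rewrite lt_neqAle eq_sym cn0.
have [d [d0 hd]] := h (eps / c) (divr_gt0 eps0 c0).
exists d; split => // x' y' hx hd'; rewrite !dotZl -mulrDr.
apply: le_trans (ler_wpM2l (ltW c0) (hd _ _ hx hd')) _.
by rewrite mulrA mulrCA mulfV ?gt_eqF // mulr1.
Qed.

Lemma reg_normal_of_proximal x y xs ys (C : R) : Phi x y -> 0 <= C ->
  (forall x' y', Phi x' y' ->
     dot xs (x' - x) + dot ys (y' - y) <= C * (enorm (x' - x) ^+ 2 + enorm (y' - y) ^+ 2)) ->
  reg_normal Phi x y xs ys.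
Proof.
move=> hP C0 prox; split=> // eps eps0.
exists (eps / (C + 1)); split=> [|x' y' hP']; first by rewrite divr_gt0 // ltr_wpDl.
set D := Num.sqrt _ => hD; apply: le_trans (prox _ _ hP') _.
have -> : enorm (x' - x) ^+ 2 + enorm (y' - y) ^+ 2 = D ^+ 2.
  by rewrite !enorm_sqr sqr_sqrtr // addr_ge0 // dot_ge0.
rewrite expr2 mulrA ler_wpM2r ?sqrtr_ge0 //.
apply: le_trans (ler_wpM2l C0 (ltW hD)) _.
by rewrite mulrCA ger_pMr // ler_pdivrMr ?ltr_wpDl // mul1r lerDl.
Qed.
End Normals.

Section Penalization.
Variables (R : realType) (n m : nat) (Phi : 'rV[R]_n -> set 'rV[R]_m).
Variables (yb : 'rV[R]_m) (x0 : 'rV[R]_n) (r : R).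

Definition penalized_residual (p : 'rV[R]_n * 'rV[R]_m) : R :=
  enorm (p.2 - yb) + r^-1 * enorm (p.1 - x0) ^+ 2.

Lemma continuous_penalized_residual : continuous penalized_residual.
Proof.
move=> p; apply: cvgD.
  exact: (continuous_comp (@cvg_snd _ _ _ _ _) (@continuous_enorm_sub _ _ yb _)).
apply: cvgM; first exact: cvg_cst.
by apply: cvgM;
  exact: (continuous_comp (@cvg_fst _ _ _ _ _) (@continuous_enorm_sub _ _ x0 _)).
Qed.

Lemma reg_normal_of_argmin xh yh : 0 < r -> yh != yb -> Phi xh yh ->
  (forall x' y', Phi x' y' -> penalized_residual (xh, yh) <= penalized_residual (x', y')) ->
  reg_normal Phi xh yh (- (2 / r) *: (xh - x0)) (- ((enorm (yh - yb))^-1 *: (yh - yb))).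
Proof.
move=> r0 yhb hP hmin; set rho := enorm (yh - yb).
have rho0 : 0 < rho by rewrite enorm_gt0 subr_eq0.
apply: (reg_normal_of_proximal (C := r^-1 + (2 * rho)^-1)) => // [|x' y' hP'].
  by rewrite addr_ge0 // invr_ge0 ?mulr_ge0 // ltW.
have := hmin _ _ hP'; rewrite /penalized_residual /= -/rho.
have yhb0 : yh - yb != 0 by rewrite subr_eq0.
have := enorm_le_tangent (y' - yb) yhb0; rewrite -/rho.
have -> : y' - yb - (yh - yb) = y' - yh.
  by rewrite opprB addrA subrK.
have -> : x' - x0 = (xh - x0) + (x' - xh) by rewrite [RHS]addrC addrA subrK.
rewrite [enorm (xh - x0 + _) ^+ 2]enorm_sqr dotDD -!enorm_sqr !dotNl !dotZl.
have : 0 <= r^-1 * enorm (y' - yh) ^+ 2 by rewrite mulr_ge0 ?invr_ge0 ?sqr_ge0 // ltW.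
have : 0 <= (2 * rho)^-1 * enorm (x' - xh) ^+ 2.
  by rewrite mulr_ge0 ?invr_ge0 ?sqr_ge0 ?mulr_ge0 // ltW.
lra.
Qed.

Lemma exists_argmin_penalized_residual y0 : closed (gph Phi) -> Phi x0 y0 -> 0 < r ->
  exists xh yh, [/\ Phi xh yh, penalized_residual (xh, yh) <= enorm (y0 - yb) &
    forall x' y', Phi x' y' -> penalized_residual (xh, yh) <= penalized_residual (x', y')].
Proof.
move=> hcl hP0 r0; set d := enorm (y0 - yb).
have d_at_start : penalized_residual (x0, y0) = d.
  by rewrite /penalized_residual /= subrr enorm0 expr0n mulr0 addr0.
set A := gph Phi `&` [set p | penalized_residual p <= d].
have sublevel_bounded p : A p ->
    enorm (p.1 - x0) <= r * d + 1 /\ enorm (p.2 - yb) <= d.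
  move=> [_ hp]; rewrite /penalized_residual in hp.
  have h0 : 0 <= r^-1 * enorm (p.1 - x0) ^+ 2 by rewrite mulr_ge0 ?invr_ge0 ?sqr_ge0 // ltW.
  have hq : enorm (p.1 - x0) ^+ 2 <= r * d.
    by rewrite -ler_pdivrMl //; apply: le_trans hp; rewrite lerDr enorm_ge0.
  split; last by apply: le_trans hp; rewrite lerDl.
  by have := enorm_ge0 (p.1 - x0); move: hq; rewrite expr2; nra.
have compactA : compact A.
  apply: (subclosed_compact _ (compact_setX (@compact_enorm_le _ _ x0 (r * d + 1))
    (@compact_enorm_le _ _ yb d))); last by move=> p /sublevel_bounded.
  apply: closedI => //.
  exact: (continuous_closedP _).1 (@continuous_penalized_residual) _ (@closed_le _ d).
have A0 : A !=set0 by exists (x0, y0); split; rewrite /= ?d_at_start.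
have [[xh yh] /set_mem [hP hd] hmin] := compact_EVT_min A0 compactA
  (continuous_subspaceT (@continuous_penalized_residual)).
exists xh, yh; split => // x' y' hP'.
have [hle|hlt] := leP (penalized_residual (x', y')) d.
  by apply: hmin; apply/mem_set.
exact: le_trans hd (ltW hlt).
Qed.
End Penalization.

Section QuasiNormality.
Variables (R : realType) (n m : nat) (Phi : 'rV[R]_n -> set 'rV[R]_m).
Variables (xb : 'rV[R]_n) (yb : 'rV[R]_m) (u : 'rV[R]_n) (e : 'I_m -> 'rV[R]_m).

Lemma not_quasi_normal_of_cvg (x : nat -> 'rV[R]_n) (y : nat -> 'rV[R]_m)
    (l : nat -> 'rV[R]_m) (eta : nat -> 'rV[R]_n) (mu : 'rV[R]_m) :
  mu != 0 ->
  (forall j, [/\ Phi (x j) (y j), x j != xb & reg_coderiv Phi (x j) (y j) (l j) (eta j)]) ->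
  (forall j i, dot mu (e i) != 0 -> 0 < dot mu (e i) * dot (y j - yb) (e i)) ->
  x @ \oo --> xb -> l @ \oo --> mu -> eta @ \oo --> (0 : 'rV[R]_n) ->
  (fun j => (enorm (x j - xb))^-1 *: (x j - xb)) @ \oo --> u ->
  (fun j => (enorm (x j - xb))^-1 *: (y j - yb)) @ \oo --> (0 : 'rV[R]_m) ->
  ~ quasi_normal_dir Phi xb yb u e.
Proof.
move=> mu0 hx sign xl ll etal ul wl; apply; exists mu; split=> //.
set t := fun j => enorm (x j - xb).
have t0 j : 0 < t j by rewrite enorm_gt0 subr_eq0; case: (hx j).
have tl : t @ \oo --> 0.
  by have := cvg_comp _ _ xl (@continuous_enorm_sub _ _ xb xb); rewrite subrr enorm0.
have yl : y @ \oo --> yb.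
  apply/subr_cvg0; rewrite -(scale0r 0).
  apply: cvg_trans (cvgZ tl wl); apply: near_eq_cvg; near=> j.
  by rewrite scalerA mulfV ?gt_eqF // scale1r.
split.
  exists (fun j => (t j)^-1 *: (x j - xb)), (fun j => (t j)^-1 *: (y j - yb)), t, eta,
    (fun j => - l j); split=> //; split=> //; split=> //; split=> //; split=> //.
  split; first exact: cvgN.
  move=> j; rewrite !scalerA !mulfV ?gt_eqF // !scale1r !(addrC xb, addrC yb) !subrK.
  by case: (hx j).
exists x, y, l, eta; split; first by move=> j; case: (hx j).
split; first by move=> j; case: (hx j).
do 6 (split=> //).
by move=> j; split; [case: (hx j) | exact: sign].
Unshelve. all: by end_near. Qed.

Lemma not_quasi_normal_of_seq (x : nat -> 'rV[R]_n) (y : nat -> 'rV[R]_m)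
    (l : nat -> 'rV[R]_m) (eta : nat -> 'rV[R]_n) :
  (forall j, [/\ Phi (x j) (y j), x j != xb, y j != yb &
     reg_coderiv Phi (x j) (y j) (l j) (eta j)]) ->
  (\forall j \near \oo, enorm (l j) = 1) ->
  x @ \oo --> xb -> eta @ \oo --> (0 : 'rV[R]_n) ->
  (fun j => (enorm (x j - xb))^-1 *: (x j - xb)) @ \oo --> u ->
  (fun j => (enorm (x j - xb))^-1 *: (y j - yb)) @ \oo --> (0 : 'rV[R]_m) ->
  (fun j => (enorm (y j - yb))^-1 *: (y j - yb) - l j) @ \oo --> (0 : 'rV[R]_m) ->
  ~ quasi_normal_dir Phi xb yb u e.
Proof.
move=> hx l1 xl etal ul wl vl.
have [mu mu0 cl] := exists_unit_cluster l1.
have [phi phil lphi] := cluster_subseq cl.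
set v := fun j => (enorm (y j - yb))^-1 *: (y j - yb).
have vphi : v \o phi @ \oo --> mu.
  have -> : v \o phi = (fun j => (v (phi j) - l (phi j)) + l (phi j)).
    by apply/funext => j; rewrite /= subrK.
  by rewrite -[mu]add0r; apply: cvgD; [exact: cvg_comp _ _ phil vl | exact: lphi].
have [N _ hN] := near_dot_sign e vphi.
set psi := fun j => phi (j + N).
have psil : psi @ \oo --> \oo := cvg_comp _ _ (cvg_addnr N) phil.
apply: (@not_quasi_normal_of_cvg (x \o psi) (y \o psi) (l \o psi) (eta \o psi) mu mu0).
- by move=> j; case: (hx (psi j)).
- move=> j i mui; have /= sign_v := hN (j + N) (leq_addl _ _) i mui.
  have yv : y (psi j) - yb = enorm (y (psi j) - yb) *: v (psi j).
    by rewrite /v scalerA mulfV ?scale1r // enorm_eq0 subr_eq0; case: (hx (psi j)).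
  rewrite yv dotZl mulrCA; apply: mulr_gt0 => //; rewrite enorm_gt0 subr_eq0.
  by case: (hx (psi j)).
- exact: cvg_comp _ _ psil xl.
- exact: cvg_comp _ _ (cvg_addnr N) lphi.
- exact: cvg_comp _ _ psil etal.
- exact: cvg_comp _ _ psil ul.
- exact: cvg_comp _ _ psil wl.
Qed.

Lemma strongly_asymp_regular_of_quasi_normal : Phi xb yb ->
  quasi_normal_dir Phi xb yb u e -> strongly_asymp_regular_dir Phi xb yb u.
Proof.
move=> hb hQN x y xs lam xs_lim ys hP hnP hy hreg xl _ xsl ul wl _ lam_big vl.
exfalso; move: hQN.
have lam_inv0 : (fun j => (enorm (lam j))^-1) @ \oo --> 0.
  apply/cvgrPdist_lt => eps eps0; have [N hN] := lam_big eps^-1.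
  exists N => // j /hN lam_gt.
  have lam0 : 0 < enorm (lam j) by apply: lt_trans lam_gt; rewrite invr_gt0.
  rewrite sub0r normrN ger0_norm ?invr_ge0 ?enorm_ge0 //.
  by rewrite -(invrK eps) ltf_pV2 ?posrE ?invr_gt0.
apply: (@not_quasi_normal_of_seq x y (fun j => (enorm (lam j))^-1 *: lam j)
  (fun j => (enorm (lam j))^-1 *: xs j)) => //.
- move=> j; split=> //.
    by apply/eqP => xE; apply: (hnP j); rewrite xE.
  by rewrite /reg_coderiv -scalerN; apply: reg_normalZ (hreg j); rewrite invr_ge0 enorm_ge0.
- have [N hN] := lam_big 0; exists N => // j /hN.
  by rewrite enorm_gt0 => /enorm_normalize.
- by rewrite -(scale0r xs_lim); exact: cvgZ lam_inv0 xsl.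
Qed.
End QuasiNormality.

Section MetricSubregularity.
Variables (R : realType) (n m : nat) (Phi : 'rV[R]_n -> set 'rV[R]_m).
Variables (xb : 'rV[R]_n) (yb : 'rV[R]_m) (u : 'rV[R]_n).

Lemma not_metric_subregular_witness (d : R) : 0 < d -> Phi xb yb ->
  ~ metric_subregular_dir Phi xb yb u ->
  exists x y' (r : R), [/\ dir_ball d d u (x - xb), Phi x y', r <= enorm (x - xb),
    forall x', Phi x' yb -> r <= enorm (x - x') & enorm (y' - yb) < d ^+ 2 * r].
Proof.
move=> d0 hb hMS.
have /existsNP [x /not_implyP [hx]] : ~ forall x, dir_ball d d u (x - xb) ->
    (Defs.edist x [set x' | Phi x' yb] <= (d ^- 2)%:E * Defs.edist yb (Phi x))%E.
  by move=> h; apply: hMS; exists d, d, (d ^- 2); rewrite invr_gt0 exprn_gt0.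
move/negP; rewrite -ltNge => hbad.
have D1_lb x' : Phi x' yb -> (Defs.edist x [set x' | Phi x' yb] <= (enorm (x - x'))%:E)%E.
  by move=> hx'; apply: ereal_inf_lbound; exists x'.
have D1_ge0 : (0 <= Defs.edist x [set x' | Phi x' yb])%E.
  by apply/ereal_infP => _ [a _ <-]; rewrite lee_fin enorm_ge0.
have D1_le := D1_lb xb hb.
move: D1_lb D1_ge0 D1_le hbad; case: (Defs.edist x _) => [r| |] //= D1_lb _ D1_le hbad.
have D2_lt : (Defs.edist yb (Phi x) < (d ^+ 2 * r)%:E)%E.
  move: hbad; case: (Defs.edist yb (Phi x)) => [s| |] //=.
  - by rewrite -EFinM !lte_fin -ltr_pdivrMl ?invr_gt0 ?exprn_gt0 // invrK.
  - by rewrite gt0_muley ?lte_fin ?invr_gt0 ?exprn_gt0.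
  - by rewrite ltNyr.
have [_ [y' hy' <-] hy'lt] := ereal_inf_lt D2_lt.
by exists x, y', r; split => //; rewrite enorm_distC -lte_fin.
Qed.

Lemma not_metric_subregular_argmin (d : R) : 0 < d -> d <= 1 / 2 ->
  closed (gph Phi) -> Phi xb yb -> enorm u = 1 -> ~ metric_subregular_dir Phi xb yb u ->
  exists x xh yh (r : R),
  [/\ enorm (x - xb) <= d, enorm (enorm (x - xb) *: u - (x - xb)) <= d * enorm (x - xb),
    0 < r, r <= enorm (x - xb) &
  [/\ Phi xh yh, ~ Phi xh yb,
    reg_coderiv Phi xh yh ((enorm (yh - yb))^-1 *: (yh - yb)) (- (2 / r) *: (xh - x)),
    enorm (xh - x) < d * r & enorm (yh - yb) < d ^+ 2 * r]].
Proof.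
move=> d0 d_half hcl hb hu hMS.
have [x [y' [r [[hdir ht] hP hrt hr hy']]]] := not_metric_subregular_witness d0 hb hMS.
rewrite hu scale1r mulr1 in hdir.
have r0 : 0 < r.
  by rewrite -(pmulr_rgt0 _ (exprn_gt0 2 d0)); exact: le_lt_trans (enorm_ge0 _) hy'.
have [xh [yh [hPh hval hmin]]] :=
  exists_argmin_penalized_residual yb (x0 := x) hcl hP r0.
rewrite /penalized_residual /= in hval.
set s := enorm (xh - x) in hval; set rho := enorm (yh - yb) in hval.
have rho0 : 0 <= rho := enorm_ge0 _.
have s0 : 0 <= s := enorm_ge0 _.
have h0 : 0 <= r^-1 * s ^+ 2 by rewrite mulr_ge0 ?invr_ge0 ?sqr_ge0 // ltW.
have s_lt : s < d * r.
  have sr : s ^+ 2 <= r * enorm (y' - yb) by rewrite -ler_pdivrMl //; lra.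
  rewrite -ltr_sqr ?nnegrE ?s0 ?(mulr_ge0 (ltW d0) (ltW r0)) //.
  by apply: le_lt_trans sr _; rewrite exprMn expr2 mulrCA ltr_pM2l.
have not_Phi_xh : ~ Phi xh yb.
  move=> /hr; rewrite enorm_distC -/s => rs.
  by have := ler_wpM2r (ltW r0) d_half; lra.
exists x, xh, yh, r; split=> //; split=> //.
- apply: reg_normal_of_argmin => //.
  by apply: contra_not_neq not_Phi_xh => <-.
- by rewrite -/rho; apply: le_lt_trans hy'; lra.
Qed.

Lemma not_metric_subregular_normal_point (d : R) : 0 < d -> d <= 1 / 2 ->
  closed (gph Phi) -> Phi xb yb -> enorm u = 1 -> ~ metric_subregular_dir Phi xb yb u ->
  exists xh yh eta, [/\ [/\ Phi xh yh, xh != xb, yh != yb &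
      reg_coderiv Phi xh yh ((enorm (yh - yb))^-1 *: (yh - yb)) eta],
    enorm (xh - xb) <= 3 * d, enorm (yh - yb) <= d * enorm (xh - xb),
    enorm ((enorm (xh - xb))^-1 *: (xh - xb) - u) <= 3 * d & enorm eta <= 2 * d].
Proof.
move=> d0 d_half hcl hb hu hMS.
have [x [xh [yh [r [ht hdir r0 hrt [hPh not_Phi_xh hN s_lt rho_lt]]]]]] :=
  not_metric_subregular_argmin d0 d_half hcl hb hu hMS.
set t := enorm (x - xb) in ht hdir hrt; set s := enorm (xh - x) in s_lt.
set T := enorm (xh - xb); set rho := enorm (yh - yb) in rho_lt.
have xhb : xh != xb by apply: contra_not_neq not_Phi_xh => ->.
have t0 : 0 < t := lt_le_trans r0 hrt.
have T_le : T <= s + t.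
  by have := ler_enormD (xh - x) (x - xb); rewrite addrA subrK.
have t_le : t <= s + T.
  by have := ler_enormD (x - xh) (xh - xb); rewrite addrA subrK (enorm_distC x xh).
have dr_le : d * r <= d * t := ler_wpM2l (ltW d0) hrt.
have dt_le : d * t <= 1 / 2 * t := ler_wpM2r (ltW t0) d_half.
exists xh, yh, (- (2 / r) *: (xh - x)); rewrite -/T -/rho; split => //.
- by split=> //; apply: contra_not_neq not_Phi_xh => <-.
- lra.
- have t2T : t <= 2 * T by lra.
  have := ler_wpM2l (exprn_ge0 2 (ltW d0)) hrt.
  have := ler_wpM2l (exprn_ge0 2 (ltW d0)) t2T.
  have : d ^+ 2 * (2 * T) <= d * T.
    rewrite (_ : d ^+ 2 * (2 * T) = d * ((2 * d) * T)); last by ring.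
    rewrite ler_pM2l // -[X in _ <= X]mul1r ler_wpM2r ?enorm_ge0 //; lra.
  lra.
- apply: (normalize_dir_le (u := x - xb)) => //; first by rewrite -enorm_gt0.
    by rewrite subr_eq0.
  rewrite opprB addrA subrK; exact: ltW (lt_le_trans s_lt dr_le).
- rewrite enormZ normrN (ger0_norm (divr_ge0 (ler0n _ 2) (ltW r0))) -/s.
  by rewrite mulrAC -mulrA ler_pM2l // ltW // ltr_pdivrMr.
Qed.

Lemma not_metric_subregular_seq : closed (gph Phi) -> Phi xb yb -> enorm u = 1 ->
  ~ metric_subregular_dir Phi xb yb u ->
  exists (x : nat -> 'rV[R]_n) (y : nat -> 'rV[R]_m) (eta : nat -> 'rV[R]_n),
  [/\ forall j, [/\ Phi (x j) (y j), x j != xb, y j != yb &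
        reg_coderiv Phi (x j) (y j) ((enorm (y j - yb))^-1 *: (y j - yb)) (eta j)],
    x @ \oo --> xb, eta @ \oo --> (0 : 'rV[R]_n),
    (fun j => (enorm (x j - xb))^-1 *: (x j - xb)) @ \oo --> u &
    (fun j => (enorm (x j - xb))^-1 *: (y j - yb)) @ \oo --> (0 : 'rV[R]_m)].
Proof.
move=> hcl hb hu hMS; pose d j : R := j.+1%:R^-1 / 2.
have d0 j : 0 < d j by rewrite divr_gt0 ?invr_gt0.
have d_half j : d j <= 1 / 2.
  by rewrite ler_pM2r ?invr_gt0 // invr_le1 ?ler1n ?unitfE ?pnatr_eq0.
have dl (c : R) : (fun j => c * d j) @ \oo --> 0.
  rewrite -(mulr0 c) -(mul0r 2^-1); apply: cvgM; first exact: cvg_cst.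
  by apply: cvgM; [exact: cvg_harmonic | exact: cvg_cst].
have /choice [p hp] j : exists p : 'rV[R]_n * 'rV[R]_m * 'rV[R]_n,
    let: (xh, yh, eta) := p in
    [/\ [/\ Phi xh yh, xh != xb, yh != yb &
      reg_coderiv Phi xh yh ((enorm (yh - yb))^-1 *: (yh - yb)) eta],
    enorm (xh - xb) <= 3 * d j, enorm (yh - yb) <= d j * enorm (xh - xb),
    enorm ((enorm (xh - xb))^-1 *: (xh - xb) - u) <= 3 * d j & enorm eta <= 2 * d j].
  have [xh [yh [eta H]]] :=
    not_metric_subregular_normal_point (d0 j) (d_half j) hcl hb hu hMS.
  by exists (xh, yh, eta).
exists (fun j => (p j).1.1), (fun j => (p j).1.2), (fun j => (p j).2).
split.
- by move=> j; move: (hp j); case: (p j) => [[xh yh] eta] [].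
- apply: cvg_enorm_le (dl 3) _ => j; move: (hp j).
  by case: (p j) => [[xh yh] eta] [].
- apply: cvg_enorm_le (dl 2) _ => j; move: (hp j); rewrite subr0.
  by case: (p j) => [[xh yh] eta] [].
- apply: cvg_enorm_le (dl 3) _ => j; move: (hp j).
  by case: (p j) => [[xh yh] eta] [].
- apply: cvg_enorm_le (dl 1) _ => j; move: (hp j); rewrite subr0 mul1r.
  case: (p j) => [[xh yh] eta] [[_ xhb _ _] _ hy _ _] /=.
  have t0 : 0 < enorm (xh - xb) by rewrite enorm_gt0 subr_eq0.
  by rewrite enormZ ger0_norm ?invr_ge0 ?enorm_ge0 // mulrC ler_pdivrMr.
Qed.

Lemma metric_subregular_of_quasi_normal (e : 'I_m -> 'rV[R]_m) :
  closed (gph Phi) -> Phi xb yb -> enorm u = 1 ->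
  quasi_normal_dir Phi xb yb u e -> metric_subregular_dir Phi xb yb u.
Proof.
move=> hcl hb hu hQN; apply: contrapT => hMS.
have [x [y [eta [hx xl etal ul wl]]]] := not_metric_subregular_seq hcl hb hu hMS.
apply: (not_quasi_normal_of_seq hx _ xl etal ul wl _ hQN).
  apply: nearW => j; apply: enorm_normalize; rewrite subr_eq0.
  by case: (hx j).
under eq_fun do rewrite subrr; exact: cvg_cst.
Qed.
End MetricSubregularity.

Unset Implicit Arguments.

Theorem theorem5p12 (R : realType) (n m : nat) (Phi : 'rV[R]_n -> set 'rV[R]_m)
    (xb : 'rV[R]_n) (yb : 'rV[R]_m) (u : 'rV[R]_n) (e : 'I_m -> 'rV[R]_m) :
  closed (gph Phi) ->
  Phi xb yb ->
  enorm u = 1 ->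
  orthonormal_basis e ->
  quasi_normal_dir Phi xb yb u e ->
  strongly_asymp_regular_dir Phi xb yb u /\ metric_subregular_dir Phi xb yb u.
Proof.
move=> hcl hb hu _ hQN; split.
- exact: strongly_asymp_regular_of_quasi_normal hb hQN.
- exact: metric_subregular_of_quasi_normal hcl hb hu hQN.
Qed.
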